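(* Let $T$ be a lifted graph, $F\colon T\to T$ a continuous sun-like map of degree 1, ${\cal P}$ a basic partition of $F$ and ${\cal G}$ its covering graph, and let $\alpha,\beta$ be vertices of ${\cal G}$. (i) All arrows starting from $\alpha$, except at most one, end at a vertex of the basis. (ii) If $\alpha\to\beta$ and $H(\beta)>0$, then $H(\beta)=H(\alpha)+1$.
   Context: A lifted graph is a connected topological space $T$ with a homeomorphism $h\colon\mathbb R\to h(\mathbb R)\subset T$ and a homeomorphism $\tau\colon T\to T$ such that $\tau(h(x))=h(x+1)$, the closure of each connected component of $T\setminus h(\mathbb R)$ is a topological finite graph meeting $h(\mathbb R)$ in exactly one point, and only finitely many such components have closure meeting $h([0,1])$. Identify $h(\mathbb R)$ with $\mathbb R$, write $x+m:=\tau^m(x)$; $r_{\mathbb R}\colon T\to\mathbb R$ is the identity on $\mathbb R$ and maps a component $C$ of $T\setminus\mathbb R$ to the point $\overline C\cap\mathbb R$. $F$ has degree 1 if $F(x+1)=F(x)+1$. Let $T_{\mathbb R}:=\overline{\bigcup_{n\ge0}F^n(\mathbb R)}$, $X:=\overline{T\setminus T_{\mathbb R}}\cap r_{\mathbb R}^{-1}([0,1))$. $F$ is sun-like if $(T\setminus T_{\mathbb R})\cap r_{\mathbb R}^{-1}([0,1))$ consists of finitely many intervals with pairwise disjoint closures $X^i$, $i\in\Lambda$ (branches), each a compact interval meeting $T_{\mathbb R}$ in one endpoint $\min X^i$ (fixing the order of $X^i$). A basic partition is a finite family ${\cal P}=\{X^i_j\}$ of pairwise disjoint nonempty compact intervals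 $X^i_1<\dots<X^i_{N_i}$ in $X^i$, with $\ell(X^i_j)\in\Lambda$, $p(X^i_j)\in\mathbb Z$, such that $F(X^i_j)\subset(X^{\ell(X^i_j)}+p(X^i_j))\cup\mathrm{Int}(T_{\mathbb R})$, $F(\min X^i_j)=\min X^{\ell(X^i_j)}+p(X^i_j)$, and $F(X\setminus\bigcup X^i_j)\cap(X+\mathbb Z)=\emptyset$. For $A_0,\dots,A_n\in{\cal P}$, $\langle A_0\dots A_n\rangle:=F^n(\{x\in T: F^i(x)\in A_i+\mathbb Z,\ 0\le i\le n\})\cap X$. $A_0\dots A_n\sim B_0\dots B_m$ iff for some $k\le\min(n,m)$, $A_{n-i}=B_{m-i}$ ($0\le i\le k$) and $\langle A_0\dots A_{n-k}\rangle=A_{n-k}=B_{m-k}=\langle B_0\dots B_{m-k}\rangle$. The covering graph ${\cal G}$: vertices are classes $A_0\dots A_n/\!\sim$ with $\langle A_0\dots A_n\rangle\ne\emptyset$; arrow $\alpha\to\beta$ iff $\alpha=A_0\dots A_n/\!\sim$, $\beta=A_0\dots A_nA_{n+1}/\!\sim$ for some $A_i\in{\cal P}$. The significant part of $A_0\dots A_n$ is $A_i\dots A_n$ with $i$ the largest index such that $A_0\dots A_n\sim A_i\dots A_n$; the height of the class $\alpha$ is $H(\alpha):=n-i$. The basis is the set of vertices of height $0$, i.e. $\{A/\!\sim: A\in{\cal P}\}$. *)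

From HB Require Import structures.
From mathcomp Require Import all_boot all_order all_algebra.
From mathcomp Require Import all_classical all_reals all_analysis.
Set Implicit Arguments. Unset Strict Implicit. Unset Printing Implicit Defensive.
Import Order.TTheory GRing.Theory Num.Theory.
Import numFieldNormedType.Exports.
Local Open Scope classical_set_scope.
Local Open Scope ring_scope.

Section LiftedGraphs.
Variables (R : realType) (T : topologicalType).

Definition homeo_onto_image (D : set R) (g : R -> T) : Prop :=
  [/\ {within D, continuous g},
      {in D &, injective g} &
      forall U : set R, open U ->
        exists V : set T, open V /\ g @` (U `&` D) = V `&` (g @` D)].

Definition finite_top_graph (G : set T) : Prop :=
  [/\ compact G, connected G,
      (forall x y, G x -> G y -> x <> y ->
         exists U V : set T, [/\ open U, open V, U x, V y & U `&` V = set0]) &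
      exists V : set T,
        [/\ finite_set V, V `<=` G,
            finite_set [set C : set T | exists x, (G `\` V) x /\
                                   C = connected_component (G `\` V) x] &
            forall x, (G `\` V) x ->
              exists g : R -> T, homeo_onto_image `]0, 1[ g /\
                 g @` `]0, 1[ = connected_component (G `\` V) x]].

Definition lifted_graph (h : R -> T) (tau tauinv : T -> T) : Prop :=
  [/\ connected [set: T] /\ homeo_onto_image setT h,
      [/\ continuous tau, continuous tauinv, cancel tau tauinv & cancel tauinv tau],
      (forall x, tau (h x) = h (x + 1)),
      (forall x, ~ range h x ->
         let C := connected_component (~` range h) x in
         finite_top_graph (closure C) /\
         exists y : R, closure C `&` range h = [set h y]) &
      finite_set [set C : set T | exists x, ~ range h x /\
          C = connected_component (~` range h) x /\
          closure C `&` (h @` `[0, 1]) !=set0]].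

(* x + m := tau^m (x), m : int *)
Definition tpow (tau tauinv : T -> T) (m : int) (x : T) : T :=
  match m with
  | Posz n => iter n tau x
  | Negz n => iter n.+1 tauinv x
  end.

Definition transZ (tau tauinv : T -> T) (A : set T) : set T :=
  \bigcup_(m in [set: int]) (tpow tau tauinv m @` A).

Definition rRpre (h : R -> T) (B : set R) : set T :=
  [set x | exists y, B y /\
     (x = h y \/ (~ range h x /\
        closure (connected_component (~` range h) x) (h y)))].

Definition TR (h : R -> T) (F : T -> T) : set T :=
  closure (\bigcup_(n in [set: nat]) (iter n F @` range h)).

Definition Xset (h : R -> T) (F : T -> T) : set T :=
  closure (~` TR h F) `&` rRpre h `[0, 1[.

(* Sun-like: the branches X^i (i : Lambda) are the arcs gam i ([0,1]),
   ordered by the parameter, with min X^i = gam i 0. *)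
Definition sun_like (h : R -> T) (F : T -> T) (Lambda : finType)
    (gam : Lambda -> R -> T) : Prop :=
  [/\ (forall i, homeo_onto_image `[0, 1] (gam i)),
      (forall i j, i <> j -> gam i @` `[0, 1] `&` gam j @` `[0, 1] = set0),
      (forall i, gam i @` `[0, 1] `&` TR h F = [set gam i 0]) &
      (~` TR h F) `&` rRpre h `[0, 1[ =
         \bigcup_(i in [set: Lambda]) (gam i @` `]0, 1])].

Definition piece (Lambda P : finType) (gam : Lambda -> R -> T)
    (br : P -> Lambda) (a b : P -> R) (A : P) : set T :=
  gam (br A) @` `[a A, b A].

Definition basic_partition (h : R -> T) (tau tauinv F : T -> T)
    (Lambda : finType) (gam : Lambda -> R -> T) (P : finType)
    (br : P -> Lambda) (a b : P -> R) (lab : P -> Lambda) (per : P -> int) :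
    Prop :=
  let pc := piece gam br a b in
  [/\ (forall A, 0 <= a A /\ a A <= b A /\ b A <= 1),
      (forall A B, A <> B -> pc A `&` pc B = set0),
      (forall A, F @` pc A `<=`
          (tpow tau tauinv (per A) @` (gam (lab A) @` `[0, 1])) `|` (TR h F)°),
      (forall A, F (gam (br A) (a A)) = tpow tau tauinv (per A) (gam (lab A) 0)) &
      F @` (Xset h F `\` \bigcup_(A in [set: P]) pc A)
        `&` transZ tau tauinv (Xset h F) = set0].

Section CoveringGraph.
Variables (h : R -> T) (tau tauinv F : T -> T) (Lambda : finType)
  (gam : Lambda -> R -> T) (P : finType) (br : P -> Lambda) (a b : P -> R).

Let pc := piece gam br a b.

Definition bracket (w : seq P) : set T :=
  iter (size w).-1 F @`
    [set x | forall i (Hi : (i < size w)%N),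
       transZ tau tauinv (pc (tnth (in_tuple w) (Ordinal Hi))) (iter i F x)]
  `&` Xset h F.

Definition wsim (w v : seq P) : Prop :=
  exists (u u' s : seq P) (A : P),
    [/\ w = rcons u A ++ s, v = rcons u' A ++ s,
        bracket (rcons u A) = pc A & bracket (rcons u' A) = pc A].

Definition wclass (w : seq P) : set (seq P) := [set v | wsim w v].

Definition word_height (w : seq P) (H : nat) : Prop :=
  exists i, [/\ (i < size w)%N, H = ((size w).-1 - i)%N, wsim w (drop i w) &
     forall j, (i < j < size w)%N -> ~ wsim w (drop j w)].

Definition vertex (V : set (seq P)) : Prop :=
  exists w, w <> [::] /\ bracket w !=set0 /\ V = wclass w.

Definition arrow (V W : set (seq P)) : Prop :=
  vertex V /\ vertex W /\
  exists w A, w <> [::] /\ V = wclass w /\ W = wclass (rcons w A).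

Definition vheight (V : set (seq P)) (H : nat) : Prop :=
  exists w, V = wclass w /\ word_height w H.

Definition basis_vertex (V : set (seq P)) : Prop :=
  vertex V /\ exists A, V = wclass [:: A].

End CoveringGraph.
End LiftedGraphs.

(* The bracket of a word satisfies <w B> = F(<w> + Z) /\ (B + Z) /\ X.  As X meets
   X + m only for m = 0, and F maps every piece into one translated branch or into
   the interior of T_R, induction on the word shows that a nonempty bracket <w A> is
   an initial subarc gam(I), a A \in I, of the piece A; read back on the branch
   X^(lab A), its image is gam(S) for a parameter interval S containing 0.  The pieces
   are disjoint parameter intervals, so at most one piece B meets S without lying in
   it, and this B is the only letter for which <w B> is neither empty nor all of B,
   i.e. the only successor class outside the basis: this is (i).
   For (ii), w = A_0 ... A_n is equivalent to A_k ... A_n exactly at the "cuts" k,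
   where <A_0 ... A_k> = A_k.  Equivalent words have the same distance from their
   last cut to their end, which is therefore the height; appending a letter either
   creates a new last cut (height 0) or keeps the old one (height + 1). *)

From HB Require Import structures.
From mathcomp Require Import all_boot all_order all_algebra.
From mathcomp Require Import all_classical all_reals all_analysis.
From mathcomp Require Import zify lra.
Import Order.TTheory GRing.Theory Num.Theory.
Import numFieldNormedType.Exports.
Local Open Scope classical_set_scope.
Local Open Scope ring_scope.
Set Implicit Arguments. Unset Strict Implicit. Unset Printing Implicit Defensive.

Section TranslationPower.
Variables (T : topologicalType) (tau tauinv : T -> T).
Hypotheses (tauK : cancel tau tauinv) (tauinvK : cancel tauinv tau).
Local Notation tp := (tpow tau tauinv).

Lemma tpowS (k : int) x : tp (k + 1) x = tau (tp k x).
Proof.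
case: k => [n|[|n]]; first by rewrite -[1]/(Posz 1) -PoszD addn1.
  by rewrite /= tauinvK.
have -> : Negz n.+1 + 1 = Negz n by rewrite !NegzE; lia.
by rewrite /= tauinvK.
Qed.

Lemma tpowB1 (k : int) x : tp (k - 1) x = tauinv (tp k x).
Proof. by rewrite -[in RHS](subrK 1 k) tpowS tauK. Qed.

Lemma tpowD (m k : int) x : tp (m + k) x = tp m (tp k x).
Proof.
elim/int_ind: m => [|n IH|n IH]; first by rewrite add0r.
  by rewrite -addn1 PoszD addrAC !tpowS IH.
by rewrite -addn1 PoszD opprD addrAC !tpowB1 IH.
Qed.

Lemma tpowK (m : int) : cancel (tp m) (tp (- m)).
Proof. by move=> x; rewrite -tpowD addNr. Qed.

Lemma tpowNK (m : int) : cancel (tp (- m)) (tp m).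
Proof. by move=> x; rewrite -tpowD addrN. Qed.

Lemma sub_transZ (A : set T) : A `<=` transZ tau tauinv A.
Proof. by move=> y Ay; exists 0 => //; exists y. Qed.

Lemma transZ_tpow (A : set T) m y :
  transZ tau tauinv A y -> transZ tau tauinv A (tp m y).
Proof. by move=> [k _ [z Az <-]]; exists (m + k) => //; exists z; rewrite ?tpowD. Qed.

Lemma tpow_continuous : continuous tau -> continuous tauinv ->
  forall m, continuous (tp m).
Proof.
have iter_cont (g : T -> T) k : continuous g -> continuous (iter k g).
  move=> cg; elim: k => [|k IH] x /=; first exact: cvg_id.
  by apply: continuous_comp; [exact: IH|exact: cg].
by move=> ctau ctauinv [n|n]; exact: iter_cont.
Qed.

Variable F : T -> T.
Hypothesis F_tau : forall x, F (tau x) = tau (F x).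

Lemma F_tpow m x : F (tp m x) = tp m (F x).
Proof.
have F_iter g k y : (forall z, F (g z) = g (F z)) -> F (iter k g y) = iter k g (F y).
  by move=> Fg; elim: k => //= k IH; rewrite Fg IH.
have F_tauinv y : F (tauinv y) = tauinv (F y).
  by rewrite -[in RHS](tauinvK y) F_tau tauK.
by case: m => n; exact: F_iter.
Qed.

Lemma iter_tpow m n x : iter n F (tp m x) = tp m (iter n F x).
Proof. by elim: n => //= n ->; rewrite F_tpow. Qed.

End TranslationPower.

Lemma continuous_image_closure (S U : topologicalType) (g : S -> U) (A : set S) :
  continuous g -> g @` closure A `<=` closure (g @` A).
Proof.
move=> cg _ [x clx <-] B /cg /clx [z [Az Bz]].
by exists (g z); split => //; exists z.
Qed.

Lemma connected_open_cover (T : topologicalType) (Q U V : set T) :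
  connected Q -> open U -> open V -> Q `<=` U `|` V ->
  Q `&` U `&` V = set0 -> Q `&` U !=set0 -> Q `<=` U.
Proof.
move=> cQ oU oV QUV QUV0 QU0.
have QUE : Q `&` U = Q `&` ~` V.
  apply/seteqP; split => x [Qx Ux]; split => //.
    by move=> Vx; have : (Q `&` U `&` V) x by []; rewrite QUV0.
  by case: (QUV x Qx).
suff <- : Q `&` U = Q by move=> x [].
apply: cQ => //; first by exists U.
by exists (~` V) => //; exact: open_closedC.
Qed.

Lemma homeo_open_trace (R : realType) (T : topologicalType) (D U : set R)
    (g : R -> T) :
  homeo_onto_image D g -> open U ->
  exists V : set T, open V /\ forall s, D s -> V (g s) <-> U s.
Proof.
move=> [_ g_inj g_open] oU; have [V [oV gUV]] := g_open U oU.
exists V; split => // s Ds; split => [Vgs|Us].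
  have : (V `&` g @` D) (g s) by split => //; exists s.
  rewrite -gUV => -[s' [Us' Ds'] /g_inj]; rewrite !inE => /(_ Ds' Ds) <- //.
by have [] : (V `&` g @` D) (g s) by rewrite -gUV; exists s.
Qed.

Lemma int_shift_unit_eq0 (R : realDomainType) (m : int) (y : R) :
  0 <= y < 1 -> 0 <= y + m%:~R < 1 -> m = 0.
Proof.
move=> /andP [y0 y1] /andP [ym0 ym1].
have : m%:~R < 1%:~R :> R by rewrite /=; lra.
have : (-1)%:~R < m%:~R :> R by rewrite /=; lra.
rewrite !ltr_int; lia.
Qed.

Lemma interval_partial_meet (R : realDomainType) (S : set R) (a1 b1 a2 b2 : R) :
  is_interval S -> S 0 -> 0 <= a1 -> 0 <= a2 ->
  S `&` `[a1, b1] !=set0 -> ~ `[a1, b1] `<=` S ->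
  S `&` `[a2, b2] !=set0 -> ~ `[a2, b2] `<=` S ->
  `[a1, b1] `&` `[a2, b2] !=set0.
Proof.
move=> iS S0 a10 a20 [s1 [Ss1 s1ab]] S1 [s2 [Ss2 s2ab]] S2.
have [t1 [t1ab St1]] := nonsubset S1; have [t2 [t2ab St2]] := nonsubset S2.
move: s1ab s2ab t1ab t2ab; rewrite /= !in_itv /= => /andP [? ?] /andP [? ?] /andP [? ?] /andP [? ?].
have s2t1 : s2 < t1.
  by rewrite ltNge; apply/negP => t1s2; apply: St1; apply: (iS 0 s2) => //; lra.
have s1t2 : s1 < t2.
  by rewrite ltNge; apply/negP => t2s1; apply: St2; apply: (iS 0 s1) => //; lra.
exists (Num.max a1 a2); rewrite /= !in_itv /= !ge_max !le_max.
by rewrite !lexx orbT /=; split; apply/andP; split; lra.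
Qed.

Lemma is_intervalI (R : numDomainType) (A B : set R) :
  is_interval A -> is_interval B -> is_interval (A `&` B).
Proof. by move=> iA iB x y [Ax Bx] [Ay By] z xzy; split; [exact: iA xzy|exact: iB xzy]. Qed.

Section WordClasses.
Context {R : realType} {T : topologicalType} {h : R -> T} {tau tauinv F : T -> T}
  {Lambda : finType} {gam : Lambda -> R -> T}
  {P : finType} {br : P -> Lambda} {a b : P -> R}.
Local Notation pc := (piece gam br a b).
Local Notation bracket := (bracket h tau tauinv F gam br a b).
Local Notation wsim := (wsim h tau tauinv F gam br a b).
Local Notation wclass := (wclass h tau tauinv F gam br a b).
Hypothesis bracket_single : forall A, bracket [:: A] = pc A.
Hypothesis bracket_congr : forall w v s, w <> [::] -> v <> [::] ->
  bracket w = bracket v -> bracket (w ++ s) = bracket (v ++ s).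

(* [d] is only the default value of [nth]. *)
Definition cut_at (d : P) (w : seq P) (k : nat) : Prop :=
  (k < size w)%N /\ bracket (take k.+1 w) = pc (nth d w k).

Definition max_cut (d : P) (w : seq P) (k : nat) : Prop :=
  cut_at d w k /\ forall j, (k < j)%N -> ~ cut_at d w j.

Lemma cut_at0 d w : w <> [::] -> cut_at d w 0.
Proof. by case: w => // A w _; split => //=; rewrite take0 bracket_single. Qed.

Lemma wsimP d w v : wsim w v <->
  exists k k', [/\ cut_at d w k, cut_at d v k' & drop k w = drop k' v].
Proof.
have cut_end (u s : seq P) A : [/\ take (size u).+1 (u ++ A :: s) = rcons u A,
    nth d (u ++ A :: s) (size u) = A, drop (size u) (u ++ A :: s) = A :: s &
    (size u < size (u ++ A :: s))%N].
  split; last by rewrite size_cat /= addnS ltnS leq_addr.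
  - by rewrite take_cat ltnNge leqnSn /= subSnn /= take0 cats1.
  - by rewrite nth_cat ltnn subnn.
  - exact: drop_size_cat.
split=> [[u [u' [s [A [-> -> uA u'A]]]]]|[k [k' [[kw wk] [kv vk'] e]]]].
  rewrite !cat_rcons; have [tu nu du su] := cut_end u s A.
  have [tu' nu' du' su'] := cut_end u' s A.
  by exists (size u), (size u'); rewrite /cut_at tu nu du tu' nu' du'.
have enth : nth d v k' = nth d w k by rewrite -[k']addn0 -[k]addn0 -!nth_drop e.
have edrop : drop k'.+1 v = drop k.+1 w.
  by rewrite -[k'.+1]add1n -[k.+1]add1n -!drop_drop e.
exists (take k w), (take k' v), (drop k.+1 w), (nth d w k); split.
- by rewrite -take_nth // cat_take_drop.
- by rewrite -enth -edrop -take_nth // cat_take_drop.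
- by rewrite -take_nth.
- by rewrite -enth -take_nth.
Qed.

Lemma wsim_refl w : w <> [::] -> wsim w w.
Proof. by case: w => // A s _; exists [::], [::], s, A; split => //; exact: bracket_single. Qed.

Lemma wsim_sym w v : wsim w v -> wsim v w.
Proof. by move=> [u [u' [s [A [ew ev uA u'A]]]]]; exists u', u, s, A. Qed.

Lemma wsim_bracket w v : wsim w v -> bracket w = bracket v.
Proof.
move=> [u [u' [s [A [-> -> uA u'A]]]]].
by apply: bracket_congr; [case: (u)|case: (u')|rewrite uA u'A].
Qed.

Lemma wsim_rcons w v A : wsim w v -> wsim (rcons w A) (rcons v A).
Proof.
move=> [u [u' [s [B [-> -> uB u'B]]]]].
by exists u, u', (rcons s A), B; rewrite -!rcons_cat.
Qed.

Lemma cut_at_shift d w v p p' : cut_at d w p -> cut_at d v p' ->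
  drop p w = drop p' v -> forall t, cut_at d w (p + t) <-> cut_at d v (p' + t).
Proof.
move=> [pw wp] [pv vp'] e t.
have sz : (size w - p = size v - p')%N by rewrite -!size_drop e.
have enth : nth d w (p + t) = nth d v (p' + t) by rewrite -!nth_drop e.
have edrop : drop p.+1 w = drop p'.+1 v.
  by rewrite -[p'.+1]add1n -[p.+1]add1n -!drop_drop e.
have etake : bracket (take (p + t).+1 w) = bracket (take (p' + t).+1 v).
  have take_nil (u : seq P) n : (n < size u)%N -> take n.+1 u <> [::] by case: u.
  rewrite -!addSn !takeD edrop; apply: bracket_congr; try exact: take_nil.
  by rewrite wp vp' -[p]addn0 -[p']addn0 -!nth_drop e.
by rewrite /cut_at etake enth; split => -[H1 H2]; split => //; lia.
Qed.

Lemma wsim_trans w v z : wsim w v -> wsim v z -> wsim w z.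
Proof.
move=> wv vz; have [u [u' [s [d _]]]] := wv.
move/(wsimP d): wv => [k1 [k1' [c1 c1' e1]]].
move/(wsimP d): vz => [k2 [k2' [c2 c2' e2]]].
apply/(wsimP d); have [le|lt] := leqP k1' k2.
  exists (k1 + (k2 - k1'))%N, k2'; split => //.
  - by apply/(cut_at_shift c1 c1' e1); rewrite subnKC.
  - by rewrite addnC -drop_drop e1 drop_drop subnK.
exists k1, (k2' + (k1' - k2))%N; split => //.
- by apply/(cut_at_shift c2 c2' e2); rewrite subnKC // ltnW.
- by rewrite e1 addnC -drop_drop -e2 drop_drop subnK // ltnW.
Qed.

Lemma wclass_eq w v : wsim w v -> wclass w = wclass v.
Proof.
move=> wv; apply/funext => z; apply/propext.
by split; [apply: wsim_trans (wsim_sym wv)|apply: wsim_trans wv].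
Qed.

Lemma wclass_wsim w v : v <> [::] -> wclass w = wclass v -> wsim w v.
Proof. by move=> vn wv; have : wclass v v := wsim_refl vn; rewrite -wv. Qed.

Lemma max_cut_exists d w : w <> [::] -> exists k, max_cut d w k.
Proof.
move=> wn.
suff [k [ck mk]] : exists k, cut_at d w k /\
    forall j, (k < j)%N -> (j < size w)%N -> ~ cut_at d w j.
  by exists k; split => // j kj cj; apply: (mk j kj _ cj); case: cj.
elim: (size w) => [|n [k [ck mk]]]; first by exists 0%N; split => //; exact: cut_at0.
have [cn|ncn] := pselect (cut_at d w n).
  have [kn|nk] := ltnP k n; first by exists n; split => // j nj jn; lia.
  by exists k; split => // j kj jn; apply: mk => //; lia.
exists k; split => // j kj; rewrite ltnS leq_eqVlt => /orP [/eqP ->|jn] //.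
exact: mk.
Qed.

Lemma max_cut_wsim d w v k k' : wsim w v -> max_cut d w k -> max_cut d v k' ->
  ((size w).-1 - k = (size v).-1 - k')%N.
Proof.
move=> /(wsimP d) [p [p' [cp cp' e]]] [ck mk] [ck' mk'].
have sh := cut_at_shift cp cp' e.
have pk : (p <= k)%N by rewrite leqNgt; apply/negP => /mk.
have pk' : (p' <= k')%N by rewrite leqNgt; apply/negP => /mk'.
have c1 : cut_at d v (p' + (k - p)) by apply/sh; rewrite subnKC.
have c2 : cut_at d w (p + (k' - p')) by apply/sh; rewrite subnKC.
have l1 : (p' + (k - p) <= k')%N by rewrite leqNgt; apply/negP => /mk'.
have l2 : (p + (k' - p') <= k)%N by rewrite leqNgt; apply/negP => /mk.
have sz : (size w - p = size v - p')%N by rewrite -!size_drop e.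
by case: cp => pw _; case: cp' => pv _; case: ck => kw _; case: ck' => kv _; lia.
Qed.

Lemma word_height_max_cut d w H : word_height h tau tauinv F gam br a b w H ->
  exists k, max_cut d w k /\ H = ((size w).-1 - k)%N.
Proof.
move=> [i [iw eH wi nj]].
have cut_wsim j : cut_at d w j -> wsim w (drop j w).
  move=> cj; apply/(wsimP d); exists j, 0%N; split => //; last by rewrite drop0.
  apply: cut_at0; case: cj => jw _ e0.
  by have := size_drop j w; rewrite e0 /=; lia.
have [k [k' [ck ck' e]]] := iffLR (wsimP d w (drop i w)) wi.
have ek : k = (k' + i)%N.
  move: e; rewrite drop_drop => /(congr1 size); rewrite !size_drop.
  by case: ck => kw _; case: ck' => + _; rewrite size_drop; lia.
have ki : k = i.
  apply/eqP; rewrite eqn_leq; apply/andP; split; last by lia.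
  rewrite leqNgt; apply/negP => ik; apply: (nj k); last exact: cut_wsim.
  by case: ck => kw _; rewrite ik kw.
exists i; split => //; split; first by rewrite -ki.
move=> j ij cj; apply: (nj j); last exact: cut_wsim.
by case: cj => jw _; rewrite ij jw.
Qed.

Lemma vheight_max_cut d w H k : w <> [::] ->
  vheight h tau tauinv F gam br a b (wclass w) H -> max_cut d w k ->
  H = ((size w).-1 - k)%N.
Proof.
move=> wn [v [wv hv]] mk; have [k' [mk' ->]] := word_height_max_cut d hv.
have vn : v <> [::] by case: mk' => -[]; case: (v).
by rewrite (max_cut_wsim (wclass_wsim vn wv) mk mk').
Qed.

Lemma cut_at_rcons d w A j : (j < size w)%N -> cut_at d (rcons w A) j <-> cut_at d w j.
Proof.
move=> jw; rewrite /cut_at size_rcons nth_rcons jw -cats1 takel_cat //.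
by split => -[_ ->]; split => //; lia.
Qed.

Lemma max_cut_rcons d w A k k' : max_cut d w k -> max_cut d (rcons w A) k' ->
  (k' < size w)%N -> k' = k.
Proof.
move=> [ck mk] [ck' mk'] k'w; have kw : (k < size w)%N by case: ck.
apply/eqP; rewrite eqn_leq; apply/andP; split; rewrite leqNgt; apply/negP.
  by move=> /mk; apply; apply/(cut_at_rcons d A k'w).
by move=> /mk'; apply; apply/(cut_at_rcons d A kw).
Qed.

End WordClasses.

Section LiftedGraph.
Variables (R : realType) (T : topologicalType) (h : R -> T) (tau tauinv : T -> T).
Hypothesis HL : lifted_graph h tau tauinv.
Local Notation tp := (tpow tau tauinv).
Local Notation comp z := (connected_component (~` range h) z).

Lemma lifted_tauK : cancel tau tauinv. Proof. by case: HL => _ []. Qed.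
Lemma lifted_tauinvK : cancel tauinv tau. Proof. by case: HL => _ []. Qed.

Lemma lifted_tpow_continuous m : continuous (tp m).
Proof. by case: HL => _ [? ? _ _] _ _ _; exact: tpow_continuous. Qed.

Lemma h_inj : injective h.
Proof. by case: HL => -[_ [_ h_inj _]] _ _ _ _ x y; apply: h_inj; rewrite inE. Qed.

Lemma tpow_h m y : tp m (h y) = h (y + m%:~R).
Proof.
have h_tau z : tau (h z) = h (z + 1) by case: HL.
have h_tauinv z : tauinv (h z) = h (z - 1).
  by rewrite -[in LHS](subrK 1 z) -h_tau lifted_tauK.
elim/int_ind: m => [|n IH|n IH]; first by rewrite addr0.
  by rewrite -addn1 PoszD (tpowS lifted_tauinvK) IH h_tau rmorphD addrA.
rewrite -addn1 PoszD opprD (tpowB1 lifted_tauK lifted_tauinvK) IH h_tauinv.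
by rewrite rmorphB addrA.
Qed.

Lemma range_tpow m x : range h (tp m x) <-> range h x.
Proof.
have range_tp k z : range h z -> range h (tp k z).
  by move=> [y _ <-]; rewrite tpow_h; exists (y + k%:~R).
split; last exact: range_tp.
by move=> /(range_tp (- m)); rewrite (tpowK lifted_tauK lifted_tauinvK).
Qed.

Lemma component_tpow m z : ~ range h z -> tp m @` comp z `<=` comp (tp m z).
Proof.
move=> nz; apply: connected_component_max.
- by exists z => //; exact: connected_component_refl.
- by move=> _ [w /connected_component_sub nw <-] /range_tpow.
- apply: connected_continuous_connected; first exact: component_connected.
  exact/continuous_subspaceT/lifted_tpow_continuous.
Qed.

Lemma closure_component_range_unique z w w' : ~ range h z ->
  closure (comp z) w -> range h w -> closure (comp z) w' -> range h w' -> w = w'.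
Proof.
move=> nz cw rw cw' rw'; case: HL => _ _ _ /(_ z nz) [_ [y0 foot]] _.
have : (closure (comp z) `&` range h) w by [].
have : (closure (comp z) `&` range h) w' by [].
by rewrite foot => -> ->.
Qed.

(* [retracts_to z y] means r_R(z) = y, so that [rRpre h B z] unfolds to
   [exists y, B y /\ retracts_to z y]. *)
Definition retracts_to (z : T) (y : R) : Prop :=
  z = h y \/ (~ range h z /\ closure (comp z) (h y)).

Lemma retracts_to_unique z y y' : retracts_to z y -> retracts_to z y' -> y = y'.
Proof.
move=> [->|[nz cy]] [e|[nz' cy']]; first exact: h_inj.
- by case: nz'; exists y.
- by case: nz; rewrite e; exists y'.
apply: h_inj; apply: (closure_component_range_unique nz cy _ cy'); by eexists.
Qed.

Lemma retracts_to_tpow m z y : retracts_to z y -> retracts_to (tp m z) (y + m%:~R).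
Proof.
move=> [->|[nz cy]]; first by left; rewrite tpow_h.
right; split; first by move/range_tpow.
apply: (closureS (component_tpow (m:=m) nz)).
apply: (continuous_image_closure (g := tp m)); first exact: lifted_tpow_continuous.
by exists (h y); rewrite ?tpow_h.
Qed.

Lemma retracts_to_range z y w : ~ range h z -> retracts_to z y ->
  closure (comp z) w -> range h w -> w = h y.
Proof.
move=> nz [ez|[_ cy]] cw rw; first by case: nz; exists y.
by apply: (closure_component_range_unique nz cw rw cy); exists y.
Qed.

Lemma retracts_to_component z y w : retracts_to z y -> comp z w -> retracts_to w y.
Proof.
move=> [ez|[nz cy]] czw.
  have rz : range h z by rewrite ez; exists y.
  by move: czw; rewrite connected_component_out // => /(_ rz).
right; split; first exact: connected_component_sub czw.
by rewrite -(same_connected_component czw).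
Qed.

Lemma rRpre01_tpow_eq0 m z :
  rRpre h `[0, 1[ z -> rRpre h `[0, 1[ (tp m z) -> m = 0.
Proof.
move=> [y [y01 ry]] [y' [y'01 ry']]; move: y01 y'01; rewrite /= !in_itv /=.
move=> y01; rewrite (retracts_to_unique ry' (retracts_to_tpow m ry)).
exact: int_shift_unit_eq0.
Qed.

End LiftedGraph.

Section SunLike.
Variables (R : realType) (T : topologicalType) (h : R -> T) (tau tauinv F : T -> T)
  (Lambda : finType) (gam : Lambda -> R -> T).
Hypotheses (HL : lifted_graph h tau tauinv) (F_tau : forall x, F (tau x) = tau (F x))
  (HS : sun_like h F gam).
Local Notation tp := (tpow tau tauinv).
Local Notation TRs := (TR h F).
Local Notation arc i := (gam i @` `[0, 1]).
Let tauK : cancel tau tauinv := lifted_tauK HL.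
Let tauinvK : cancel tauinv tau := lifted_tauinvK HL.
Let F_tp := F_tpow tauK tauinvK F_tau.
Let iter_tp := iter_tpow tauK tauinvK F_tau.

Lemma range_sub_TR : range h `<=` TRs.
Proof. by move=> x rx; apply: subset_closure; exists 0%N => //; exists x. Qed.

Lemma closed_TR : closed TRs. Proof. exact: closed_closure. Qed.

Lemma TR_tpow m x : TRs x -> TRs (tp m x).
Proof.
move=> TRx.
have orbit_tpow : tp m @` (\bigcup_(n in [set: nat]) (iter n F @` range h)) `<=`
                  \bigcup_(n in [set: nat]) (iter n F @` range h).
  move=> _ [_ [n _ [_ [y _ <-] <-]] <-]; exists n => //.
  exists (h (y + m%:~R)); first by eexists.
  by rewrite -(tpow_h HL) iter_tp.
apply: (closureS orbit_tpow); apply: (continuous_image_closure (g := tp m)).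
  exact: (lifted_tpow_continuous HL).
by exists x.
Qed.

Lemma TR_interior_tpow m x : TRs° x -> TRs° (tp m x).
Proof.
move=> TRx; have : nbhs (tp m x) (tp (- m) @^-1` TRs).
  by apply: (lifted_tpow_continuous HL); rewrite (tpowK tauK tauinvK).
apply: filterS => y /= /(TR_tpow (m := m)).
by rewrite (tpowNK tauK tauinvK).
Qed.

Lemma gam_homeo i : homeo_onto_image `[0, 1] (gam i). Proof. by case: HS. Qed.

Lemma gam_inj i s t : gam i s = gam i t -> 0 <= s <= 1 -> 0 <= t <= 1 -> s = t.
Proof.
by case: (gam_homeo i) => _ gi _ e s01 t01; apply: gi; rewrite // inE /= in_itv.
Qed.

Lemma arc_TR i : arc i `&` TRs = [set gam i 0]. Proof. by case: HS. Qed.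

Lemma arc_disjoint i j : i <> j -> arc i `&` arc j = set0.
Proof. by case: HS => _ + _ _; apply. Qed.

Lemma gam_notin_TR i t : 0 < t <= 1 -> ~ TRs (gam i t).
Proof.
move=> /andP [t0 t1] TRt.
have : (arc i `&` TRs) (gam i t) by split => //; exists t; rewrite //= in_itv /= t1 ltW.
rewrite arc_TR => /gam_inj; rewrite t1 ltW // lexx ler01 => /(_ isT isT) t_eq0.
by move: t0; rewrite t_eq0 ltxx.
Qed.

Lemma gam_rRpre i t : 0 < t <= 1 -> (~` TRs `&` rRpre h `[0, 1[) (gam i t).
Proof.
move=> t01; case: HS => _ _ _ ->.
by exists i => //; exists t => //=; rewrite in_itv.
Qed.

Lemma gam0_closure i : closure (gam i @` `]0, 1]) (gam i 0).
Proof.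
move=> B nB.
have : gam i @ within `[0, 1] (nbhs (0 : R)) --> gam i 0.
  case: (gam_homeo i) => /subspace_continuousP + _ _; apply.
  by rewrite /= in_itv /= lexx ler01.
move=> /(_ _ nB); rewrite /= nbhs_simpl /within /= => /nbhs_ballP [e /= e0 be].
pose t := Num.min (e / 2) 1.
have t0 : 0 < t by rewrite lt_min ltr01 andbT divr_gt0.
have t1 : t <= 1 by rewrite ge_min lexx orbT.
exists (gam i t); split; first by exists t => //=; rewrite in_itv /= t0 t1.
apply: be; last by rewrite /= in_itv /= t1 ltW.
by rewrite /ball /= sub0r normrN gtr0_norm // gt_min; apply/orP; left; lra.
Qed.

Lemma gam0_notin_interior i : ~ TRs° (gam i 0).
Proof.
suff : closure (~` TRs) (gam i 0) by rewrite closure_setC.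
apply: (closureS _ (gam0_closure (i := i))) => _ [t t01 <-].
by move: t01; rewrite /= in_itv => /(gam_rRpre i) [].
Qed.

Lemma arc_TR_interior i : arc i `&` TRs° = set0.
Proof.
apply/seteqP; split => // y [ay iy].
have : (arc i `&` TRs) y by split => //; exact: interior_subset.
by rewrite arc_TR /= => ey; apply: (gam0_notin_interior (i := i)); rewrite -ey.
Qed.

Lemma gam_notin_range i t : 0 < t <= 1 -> ~ range h (gam i t).
Proof. by case/(gam_rRpre i) => nT _ /range_sub_TR. Qed.

Lemma arc_sub_component i (I : set R) : I `<=` `[0, 1] -> connected I -> I 1 ->
  (forall t, I t -> ~ range h (gam i t)) ->
  gam i @` I `<=` connected_component (~` range h) (gam i 1).
Proof.
move=> I01 cI I1 nrI; apply: connected_component_max.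
- by exists 1.
- by move=> _ [t It <-]; exact: nrI.
apply: connected_continuous_connected => //.
by case: (gam_homeo i) => + _ _; exact: continuous_subspaceW.
Qed.

Lemma gam0_rRpre i : rRpre h `[0, 1[ (gam i 0).
Proof.
have i1 : 0 < (1 : R) <= 1 by rewrite ltr01 lexx.
have [_ [y [y01 ry]]] := gam_rRpre i i1.
exists y; split => //.
have [r0|nr0] := pselect (range h (gam i 0)).
  left; apply: (retracts_to_range HL (gam_notin_range i1) ry _ r0).
  apply: (closureS _ (gam0_closure (i := i))); apply: arc_sub_component.
  - by move=> t; rewrite /= !in_itv /= => /andP [/ltW -> ->].
  - exact/connected_intervalP/interval_is_interval.
  - by rewrite /= in_itv /= ltr01 lexx.
  - by move=> t; rewrite /= in_itv /=; exact: gam_notin_range.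
apply: (retracts_to_component ry); apply: (arc_sub_component (I := `[0, 1])) => //.
- exact: segment_connected.
- by rewrite /= in_itv /= ler01 lexx.
- move=> t; have [->|tn0] := eqVneq t 0; first by [].
  rewrite /= in_itv /= => /andP [t0 t1]; apply: gam_notin_range.
  by rewrite lt_def tn0 t0.
- by exists 0 => //; rewrite /= in_itv /= lexx ler01.
Qed.

Lemma arc_sub_X i t : 0 <= t <= 1 -> Xset h F (gam i t).
Proof.
move=> /andP [t0 t1]; have [->|tn0] := eqVneq t 0.
  split; last exact: gam0_rRpre.
  apply: (closureS _ (gam0_closure (i := i))) => _ [s s01 <-].
  by move: s01; rewrite /= in_itv => /(gam_rRpre i) [].
have [nT rR] : (~` TRs `&` rRpre h `[0, 1[) (gam i t).
  by apply: gam_rRpre; rewrite t1 lt_def tn0 t0.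
by split => //; exact: subset_closure.
Qed.

Lemma arc_preimage_interval l (Q : set T) : connected Q ->
  Q `<=` arc l `|` TRs° -> is_interval [set t | 0 <= t <= 1 /\ Q (gam l t)].
Proof.
move=> cQ QTR t1 t2 [t101 Q1] [t201 Q2] t /andP [t1t tt2].
have in01 (s : R) : 0 <= s <= 1 -> `[0, 1]%classic s by rewrite /= in_itv.
have t01 : 0 <= t <= 1 by move: t101 t201 => /andP [? ?] /andP [? ?]; apply/andP; split; lra.
split => //; apply: contrapT => nQt.
have [V1 [oV1 V1E]] := homeo_open_trace (gam_homeo l) (@open_gt _ t).
have [V2 [oV2 V2E]] := homeo_open_trace (gam_homeo l) (@open_lt _ t).
have nT s : 0 <= s <= 1 -> t < s -> ~ TRs (gam l s).
  move=> /andP [_ s1] ts; apply: gam_notin_TR; rewrite s1 andbT.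
  by move: t01 => /andP [? _]; lra.
have QUV : Q `<=` (V1 `&` ~` TRs) `|` (V2 `|` TRs°).
  move=> x Qx; have [[s /= + ex]|iT] := QTR x Qx; last by right; right.
  subst x; rewrite in_itv /= => s01; have [st|ts|e] := ltgtP s t.
  - by right; left; apply/V2E => //; exact: in01.
  - by left; split; [apply/V1E => //; exact: in01|exact: nT].
  - by case: nQt; rewrite -e.
have QUV0 : Q `&` (V1 `&` ~` TRs) `&` (V2 `|` TRs°) = set0.
  apply/seteqP; split => // x [[Qx [V1x nTx]] [V2x|/interior_subset //]].
  have [[s /= + es]|/interior_subset //] := QTR x Qx.
  rewrite in_itv /= => /in01 s01; rewrite -es in V1x V2x.
  by move/(V1E _ s01): V1x => /=; move/(V2E _ s01): V2x => /=; lra.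
have t_t2 : t < t2 by rewrite lt_neqAle tt2 andbT; apply/eqP => e; apply: nQt; rewrite e.
have QU2 : (Q `&` (V1 `&` ~` TRs)) (gam l t2).
  by split => //; split; [apply/V1E => //; exact: in01|exact: nT].
have := connected_open_cover cQ (openI oV1 (closed_openC closed_TR))
  (openU oV2 (@open_interior T TRs)) QUV QUV0 (ex_intro _ _ QU2) Q1.
by move=> [/(V1E _ (in01 _ t101)) /=]; lra.
Qed.

Lemma X_tpow_eq0 m z : Xset h F z -> Xset h F (tp m z) -> m = 0.
Proof. by move=> [_ Xz] [_ Xmz]; exact: (rRpre01_tpow_eq0 HL Xz Xmz). Qed.

Lemma X_transZ_sub (S : set T) : S `<=` Xset h F ->
  Xset h F `&` transZ tau tauinv S `<=` S.
Proof.
move=> SX y [Xy [k _ [z Sz ez]]].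
have k0 : k = 0 by apply: (X_tpow_eq0 (SX z Sz)); rewrite ez.
by move: ez; rewrite k0 => <-.
Qed.

Variables (P : finType) (br : P -> Lambda) (a b : P -> R)
  (lab : P -> Lambda) (per : P -> int).
Hypotheses (F_cont : continuous F)
  (HB : basic_partition h tau tauinv F gam br a b lab per).
Local Notation X := (Xset h F).
Local Notation pc := (piece gam br a b).
Local Notation transZ := (transZ tau tauinv).
Local Notation bracket := (bracket h tau tauinv F gam br a b).

Lemma piece_bounds A : 0 <= a A /\ a A <= b A /\ b A <= 1.
Proof. by case: HB => + _ _ _ _; apply. Qed.

Lemma piece_param01 A t : `[a A, b A]%classic t -> 0 <= t <= 1.
Proof.
have [a0 [ab b1]] := piece_bounds A.
by rewrite /= in_itv /= => /andP [? ?]; apply/andP; split; lra.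
Qed.

Lemma piece_sub_X A : pc A `<=` X.
Proof. by move=> _ [t /piece_param01 t01 <-]; exact: arc_sub_X. Qed.

Definition follows (d : P) (w : seq P) (x : T) : Prop :=
  forall i, (i < size w)%N -> transZ (pc (nth d w i)) (iter i F x).

Lemma bracketE d w : bracket w = iter (size w).-1 F @` follows d w `&` X.
Proof.
rewrite /bracket /follows; congr (_ `&` _); congr (_ @` _).
apply/funext => x; apply/propext; split => H i Hi; have := H i Hi;
  by rewrite (tnth_nth d).
Qed.

Lemma follows_tpow d w m x : follows d w x -> follows d w (tp m x).
Proof.
move=> wx i Hi; rewrite iter_tp.
exact/(transZ_tpow tauK tauinvK)/wx.
Qed.

Lemma follows_rcons d w B x :
  follows d (rcons w B) x <-> follows d w x /\ transZ (pc B) (iter (size w) F x).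
Proof.
split => [wBx|[wx Bx] i].
  split; last by have := wBx (size w); rewrite size_rcons nth_rcons ltnn eqxx; apply.
  by move=> i Hi; have := wBx i; rewrite size_rcons nth_rcons Hi; apply; lia.
rewrite size_rcons nth_rcons ltnS leq_eqVlt => /orP [/eqP ->|Hi].
  by rewrite ltnn eqxx.
by rewrite Hi; exact: wx.
Qed.

Lemma bracket1 A : bracket [:: A] = pc A.
Proof.
rewrite (bracketE A) /=; apply/seteqP; split.
  move=> _ [[x Ax <-] Xx]; apply: (X_transZ_sub (piece_sub_X (A := A))).
  by split => //; exact: (Ax 0%N).
move=> x Ax; split; last exact: piece_sub_X Ax.
by exists x => //; case=> //= _; exact: sub_transZ.
Qed.

Definition next_bracket (J : set T) (B : P) : set T :=
  F @` transZ J `&` transZ (pc B) `&` X.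

Lemma next_bracket0 B : next_bracket set0 B = set0.
Proof. by apply/seteqP; split => // y [[[u [k _ [j []]]]]]. Qed.

Lemma bracket_rcons w B : w <> [::] -> bracket (rcons w B) = next_bracket (bracket w) B.
Proof.
move=> wn; have [n sw] : exists n, size w = n.+1 by case: w wn => // A w _; exists (size w).
rewrite /next_bracket !(bracketE B) size_rcons sw /=.
apply/seteqP; split.
  move=> _ [[x /follows_rcons [wx Bx] <-] Xy]; split => //; split; last by rewrite -sw.
  exists (iter n F x) => //.
  have := wx n; rewrite sw ltnSn => /(_ isT) [k _ [z wz ez]].
  exists k => //; exists z => //; split; last exact: piece_sub_X wz.
  exists (tp (- k) x); first exact: follows_tpow.
  by rewrite iter_tp -ez (tpowK tauK tauinvK).
move=> y [[[u [k _ [_ [[x wx <-] _] <-]] <-] By] Xy]; split => //.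
exists (tp k x); last by rewrite iter_tp F_tp.
apply/follows_rcons; split; first exact: follows_tpow.
by rewrite sw iter_tp /= -F_tp.
Qed.

Lemma eq_bracket_cat w v s : w <> [::] -> v <> [::] -> bracket w = bracket v ->
  bracket (w ++ s) = bracket (v ++ s).
Proof.
move=> wn vn wv; elim/last_ind: s => [|s B IH]; first by rewrite !cats0.
rewrite -!rcons_cat !bracket_rcons ?IH //.
- by case: (v) vn.
- by case: (w) wn.
Qed.

Definition initial_subarc (J : set T) (A : P) : Prop :=
  exists I : set R,
    [/\ is_interval I, I (a A), I `<=` `[a A, b A] & J = gam (br A) @` I].

Definition image_param (A : P) (I : set R) : set R :=
  [set t | 0 <= t <= 1 /\
     exists2 r, I r & tp (- per A) (F (gam (br A) r)) = gam (lab A) t].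

Lemma F_piece A t : `[a A, b A]%classic t ->
  ((tp (per A) @` arc (lab A)) `|` TRs°) (F (gam (br A) t)).
Proof.
by move=> tab; case: HB => _ _ /(_ A) + _ _; apply; exists (gam (br A) t) => //; exists t.
Qed.

Lemma image_param_interval A I : is_interval I -> I `<=` `[a A, b A] ->
  is_interval (image_param A I).
Proof.
move=> iI Iab.
apply: (arc_preimage_interval (l := lab A)
  (Q := (fun r => tp (- per A) (F (gam (br A) r))) @` I)).
  apply: connected_continuous_connected; first exact/connected_intervalP.
  move=> r; apply: continuous_comp; last exact: (lifted_tpow_continuous HL).
  apply: continuous_comp; last exact: F_cont.
  have I01 : I `<=` `[0, 1] by move=> s /Iab /piece_param01; rewrite /= in_itv.
  by case: (gam_homeo (br A)) => gc _ _; exact: (continuous_subspaceW I01 gc (x := r)).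
move=> _ [r /Iab Ir <-]; case: (F_piece Ir) => [[g ag <-]|iT].
  by left; rewrite (tpowK tauK tauinvK).
by right; exact: TR_interior_tpow.
Qed.

Lemma image_param0 A I : I (a A) -> image_param A I 0.
Proof.
move=> Ia; split; first by rewrite lexx ler01.
by exists (a A) => //; case: HB => _ _ _ -> _; rewrite (tpowK tauK tauinvK).
Qed.

Lemma next_bracket_subarc_sub A I B y : I `<=` `[a A, b A] ->
  next_bracket (gam (br A) @` I) B y ->
  br B = lab A /\ (gam (br B) @` (image_param A I `&` `[a B, b B])) y.
Proof.
move=> Iab [[[_ [k _ [_ [r Ir <-] <-]] <-] TBy] Xy].
have [t tab ey] : pc B (F (tp k (gam (br A) r))).
  exact: (X_transZ_sub (piece_sub_X (A := B))).
have t01 := piece_param01 tab.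
case: (F_piece (Iab r Ir)) => [[g [s s01 gs] eF]|iT]; last first.
  have : (arc (br B) `&` TRs°) (gam (br B) t).
    split; first by exists t => //; rewrite /= in_itv.
    by rewrite ey F_tp; exact: TR_interior_tpow.
  by rewrite arc_TR_interior.
have kp0 : k + per A = 0.
  apply: (X_tpow_eq0 (z := g)); first by rewrite -gs; exact: arc_sub_X.
  by rewrite (tpowD tauK tauinvK) eF -F_tp -ey; exact: arc_sub_X.
have eyg : gam (br B) t = g by rewrite ey F_tp -eF -(tpowD tauK tauinvK) kp0.
have eB : br B = lab A.
  apply: contrapT => nB.
  have : (arc (br B) `&` arc (lab A)) g.
    by split; [exists t => //; rewrite /= in_itv|exists s].
  by rewrite arc_disjoint.
split => //; exists t => //; split => //; split => //.
by exists r => //; rewrite -eF (tpowK tauK tauinvK) -eyg eB.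
Qed.

Lemma next_bracket_subarc A I B : I `<=` `[a A, b A] ->
  next_bracket (gam (br A) @` I) B =
  if br B == lab A then gam (br B) @` (image_param A I `&` `[a B, b B]) else set0.
Proof.
move=> Iab; apply/seteqP; split.
  by move=> y /(next_bracket_subarc_sub Iab) [-> By]; rewrite eqxx.
case: eqP => [eB|_] // _ [t [[t01 [r Ir er]] tab] <-].
split; [split|].
- exists (tp (- per A) (gam (br A) r)); last by rewrite F_tp eB.
  by exists (- per A) => //; exists (gam (br A) r) => //; exists r.
- by apply: sub_transZ; exists t.
- exact: piece_sub_X (ex_intro2 _ _ t tab erefl).
Qed.

Lemma next_bracket_initial J A B : initial_subarc J A ->
  next_bracket J B = set0 \/ initial_subarc (next_bracket J B) B.
Proof.
move=> [I [iI Ia Iab ->]]; rewrite next_bracket_subarc //.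
case: (br B == lab A); last by left.
set S := image_param A I.
have [[t [St tab]]|S0] := pselect (S `&` `[a B, b B] !=set0); last first.
  by left; apply/seteqP; split => // y [t Stab _]; apply: S0; exists t.
have [a0 [ab _]] := piece_bounds B.
right; exists (S `&` `[a B, b B]); split => //.
- by apply: is_intervalI; [exact: image_param_interval|exact: interval_is_interval].
- split; last by rewrite /= in_itv /= lexx ab.
  apply: (image_param_interval iI Iab (image_param0 Ia) St).
  by move: tab; rewrite /= in_itv /= a0 => /andP [-> _].
Qed.

Lemma bracket_initial w B :
  bracket (rcons w B) = set0 \/ initial_subarc (bracket (rcons w B)) B.
Proof.
elim/last_ind: w B => [|w A IH] B.
  right; rewrite bracket1; exists `[a B, b B]%classic; split => //.
  - exact: interval_is_interval.
  - by have [_ [ab _]] := piece_bounds B; rewrite /= in_itv /= lexx ab.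
rewrite bracket_rcons; last by case: (w).
case: (IH A) => [->|JA]; first by left; exact: next_bracket0.
exact: next_bracket_initial JA.
Qed.

Lemma next_bracket_partial A I B : I `<=` `[a A, b A] ->
  next_bracket (gam (br A) @` I) B !=set0 -> next_bracket (gam (br A) @` I) B <> pc B ->
  [/\ br B = lab A, image_param A I `&` `[a B, b B] !=set0 &
      ~ `[a B, b B] `<=` image_param A I].
Proof.
move=> Iab; rewrite next_bracket_subarc //; case: eqP => [eB|_]; last by case.
move=> [_ [t Stab _]] nB; split => //; first by exists t.
move=> abS; apply: nB; rewrite /piece; congr (_ @` _).
by apply/seteqP; split => [s []//|s sab]; split => //; exact: abS.
Qed.

Lemma partial_successor_unique J A B1 B2 : initial_subarc J A ->
  next_bracket J B1 !=set0 -> next_bracket J B1 <> pc B1 ->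
  next_bracket J B2 !=set0 -> next_bracket J B2 <> pc B2 -> B1 = B2.
Proof.
move=> [I [iI Ia Iab ->]] + + + +.
move=> /next_bracket_partial p1 /p1 [//|e1 S1 nS1].
move=> /next_bracket_partial p2 /p2 [//|e2 S2 nS2].
apply: contrapT => nB.
have [a10 _] := piece_bounds B1; have [a20 _] := piece_bounds B2.
have [m [m1 m2]] := interval_partial_meet (image_param_interval iI Iab)
  (image_param0 Ia) a10 a20 S1 nS1 S2 nS2.
have : (pc B1 `&` pc B2) (gam (br B1) m) by split; [exists m|exists m; rewrite // e1 e2].
by case: HB => _ /(_ _ _ nB) -> _ _ _.
Qed.

Lemma next_bracket_nonempty J B : next_bracket J B !=set0 -> J !=set0.
Proof. by case=> _ [[[_ [_ _ [j Jj _]] _] _] _]; exists j. Qed.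

Lemma bracket_initial_last w : w <> [::] -> bracket w !=set0 ->
  exists A, initial_subarc (bracket w) A.
Proof.
case/lastP: w => // w A _ [x wAx]; exists A.
by case: (bracket_initial w A) => // e; move: wAx; rewrite e.
Qed.

Local Notation wsim := (wsim h tau tauinv F gam br a b).
Local Notation wclass := (wclass h tau tauinv F gam br a b).
Local Notation vertex := (vertex h tau tauinv F gam br a b).
Local Notation basis_vertex := (basis_vertex h tau tauinv F gam br a b).
Local Notation arrow := (arrow h tau tauinv F gam br a b).
Local Notation vheight := (vheight h tau tauinv F gam br a b).

Lemma nonbasis_successor w A : w <> [::] -> vertex (wclass (rcons w A)) ->
  ~ basis_vertex (wclass (rcons w A)) ->
  next_bracket (bracket w) A !=set0 /\ next_bracket (bracket w) A <> pc A.
Proof.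
move=> wn [v [vn [nv ev]]] nb; rewrite -bracket_rcons //.
have wAv : bracket (rcons w A) = bracket v.
  by apply: (wsim_bracket eq_bracket_cat); apply: (wclass_wsim bracket1).
split; first by rewrite wAv.
move=> wA; apply: nb; split; first by exists v.
exists A; apply: (wclass_eq eq_bracket_cat).
by exists w, [::], [::], A; rewrite !cats0 bracket1.
Qed.

Lemma arrow_nonbasis_unique V W1 W2 : arrow V W1 -> arrow V W2 ->
  ~ basis_vertex W1 -> ~ basis_vertex W2 -> W1 = W2.
Proof.
move=> [_ [vW1 [w1 [A1 [w1n [eV1 eW1]]]]]] [_ [vW2 [w2 [A2 [w2n [eV2 eW2]]]]]].
rewrite eW1 eW2 in vW1 vW2 * => nb1 nb2.
have w12 : wsim w1 w2.
  by apply: (wclass_wsim bracket1 w2n); rewrite -eV1 eV2.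
have [n1 p1] := nonbasis_successor w1n vW1 nb1.
have [] := nonbasis_successor w2n vW2 nb2; rewrite -(wsim_bracket eq_bracket_cat w12).
move=> n2 p2; have [A JA] := bracket_initial_last w1n (next_bracket_nonempty n1).
rewrite (partial_successor_unique JA n1 p1 n2 p2).
exact/(wclass_eq eq_bracket_cat)/wsim_rcons.
Qed.

Lemma arrow_height V W HV HW : arrow V W -> vheight V HV -> vheight W HW ->
  (0 < HW)%N -> HW = HV.+1.
Proof.
move=> [_ [_ [w [A [wn [-> ->]]]]]] hV hW HW0.
have wAn : rcons w A <> [::] by case: (w).
have [k mk] := max_cut_exists bracket1 A wn.
have [k' mk'] := max_cut_exists bracket1 A wAn.
have -> := vheight_max_cut bracket1 eq_bracket_cat wn hV mk.
move: HW0; have -> := vheight_max_cut bracket1 eq_bracket_cat wAn hW mk'.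
rewrite size_rcons /= => k'w.
by rewrite (max_cut_rcons mk mk'); [case: mk => -[kw _] _; lia|lia].
Qed.

End SunLike.

Theorem mainTheorem7 (R : realType) (T : topologicalType)
  (h : R -> T) (tau tauinv : T -> T) (F : T -> T)
  (Lambda : finType) (gam : Lambda -> R -> T)
  (P : finType) (br : P -> Lambda) (a b : P -> R)
  (lab : P -> Lambda) (per : P -> int) :
  lifted_graph h tau tauinv ->
  continuous F ->
  (forall x, F (tau x) = tau (F x)) ->
  sun_like h F gam ->
  basic_partition h tau tauinv F gam br a b lab per ->
  (forall V W1 W2 : set (seq P),
     arrow h tau tauinv F gam br a b V W1 ->
     arrow h tau tauinv F gam br a b V W2 ->
     ~ basis_vertex h tau tauinv F gam br a b W1 ->
     ~ basis_vertex h tau tauinv F gam br a b W2 -> W1 = W2) /\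
  (forall (V W : set (seq P)) (HV HW : nat),
     arrow h tau tauinv F gam br a b V W ->
     vheight h tau tauinv F gam br a b V HV ->
     vheight h tau tauinv F gam br a b W HW ->
     (0 < HW)%N -> HW = HV.+1).
Proof.
move=> HL F_cont F_tau HS HB.
split; first exact: (arrow_nonbasis_unique HL F_tau HS F_cont HB).
exact: (arrow_height HL F_tau HS HB).
Qed.
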